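(* If $G$ is a graph that has a min-max clique covering with simple intersection, then both $G$ and its compressed cliques graph $\mathcal{C}(G)$ are claw-free (contain no induced subgraph isomorphic to $K_{1,3}$).
   Context: A clique covering of a graph is a set of cliques such that every edge lies in at least one of them; $\operatorname{cc}(G)$ is its minimum size. A min-max clique covering is a clique covering of size $\operatorname{cc}(G)$ consisting of maximal cliques; it has simple intersection if no three distinct cliques of it share a vertex. Given such a covering $\{C_1,\dots,C_\ell\}$, put $C_{i,j}=C_i\cap C_j$ ($i\ne j$) and $C_{i,i}=C_i\setminus\bigcup_{j\ne i}C_j$; the compressed cliques graph $\mathcal{C}(G)$ has a vertex $v_{i,j}$ for each non-empty $C_{i,j}$ (including $i=j$), with $v_{i,j}\sim v_{i',j'}$ iff $\{i,j\}\cap\{i',j'\}\ne\emptyset$. *)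

From mathcomp Require Import all_boot.
Set Implicit Arguments. Unset Strict Implicit. Unset Printing Implicit Defensive.

Section Graphs.
Variable T : finType.

Definition simple_graph (e : rel T) : Prop := symmetric e /\ irreflexive e.

Definition is_clique (e : rel T) (C : {set T}) : Prop :=
  forall x y, x \in C -> y \in C -> x != y -> e x y.

Definition maximal_clique (e : rel T) (C : {set T}) : Prop :=
  is_clique e C /\ forall D : {set T}, is_clique e D -> C \subset D -> D = C.

Definition clique_covering (e : rel T) (P : {set {set T}}) : Prop :=
  (forall C, C \in P -> is_clique e C) /\
  (forall x y, e x y -> exists2 C, C \in P & (x \in C) && (y \in C)).

Definition minmax_clique_covering (e : rel T) (P : {set {set T}}) : Prop :=
  [/\ clique_covering e P,
      (forall Q, clique_covering e Q -> #|P| <= #|Q|) &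
      (forall C, C \in P -> maximal_clique e C)].

Definition simple_intersection (P : {set {set T}}) : Prop :=
  forall C1 C2 C3 x, C1 \in P -> C2 \in P -> C3 \in P ->
    C1 != C2 -> C1 != C3 -> C2 != C3 ->
    ~ [/\ x \in C1, x \in C2 & x \in C3].

(* The set C_{i,j}, indexed by the unordered pair S = {C_i, C_j} (a subset of
   P of size 1 or 2): for S = {C_i, C_j} with i <> j it is C_i ∩ C_j,
   for S = {C_i} it is C_i minus the union of the other cliques. *)
Definition cpart (P : {set {set T}}) (S : {set {set T}}) : {set T} :=
  if #|S| == 2 then \bigcap_(C in S) C
  else \bigcup_(C in S) C :\: \bigcup_(D in P :\: S) D.

Definition ccg_vertex (P : {set {set T}}) (S : {set {set T}}) : bool :=
  [&& S \subset P, 0 < #|S| <= 2 & cpart P S != set0].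

Definition ccg_adj (S S' : {set {set T}}) : bool :=
  (S != S') && (S :&: S' != set0).

End Graphs.

Definition claw_free (U : finType) (V : pred U) (r : rel U) : Prop :=
  ~ exists x a b c,
      [/\ [&& x \in V, a \in V, b \in V & c \in V],
          [&& a != b, a != c & b != c],
          [&& r x a, r x b & r x c] &
          [&& ~~ r a b, ~~ r a c & ~~ r b c]].

From mathcomp Require Import all_boot.

(* A claw centred at x has three pairwise non-adjacent leaves; the cliques
   covering the three edges at x are then pairwise distinct and all contain x,
   which simple intersection forbids.  A vertex of the compressed cliques graph
   is a set of at most two cliques, and pairwise non-adjacent neighbours of it
   are pairwise disjoint, so they cannot each meet it in a different clique. *)

Lemma claw_free_subpred (U : finType) (V W : pred U) (r : rel U) :
  {subset W <= V} -> claw_free V r -> claw_free W r.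
Proof.
move=> sWV clawV [x [a [b [c [/and4P[Wx Wa Wb Wc] ndiff adj nadj]]]]].
by apply: clawV; exists x, a, b, c; rewrite !sWV.
Qed.

Lemma claw_free_clique_covering (T : finType) (e : rel T) (P : {set {set T}})
    (V : pred T) :
  clique_covering e P -> simple_intersection P -> claw_free V e.
Proof.
move=> [Pclique Pcover] Psimple.
move=> [x [a [b [c [_ /and3P[ab ac bc] /and3P[xa xb xc] /and3P[nab nac nbc]]]]]].
have [Ca CaP /andP[xCa aCa]] := Pcover _ _ xa.
have [Cb CbP /andP[xCb bCb]] := Pcover _ _ xb.
have [Cc CcP /andP[xCc cCc]] := Pcover _ _ xc.
have separate (C D : {set T}) y z :
    C \in P -> y \in C -> z \in D -> y != z -> ~~ e y z -> C != D.
  move=> CP yC zD yz; apply: contraNneq => CD.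
  by apply: (Pclique C) => //; rewrite CD.
apply: (Psimple Ca Cb Cc x) => //.
- exact: separate CaP aCa bCb ab nab.
- exact: separate CaP aCa cCc ac nac.
- exact: separate CbP bCb cCc bc nbc.
Qed.

Lemma ccg_nonadj_neq (T : finType) (S S' : {set {set T}}) (p q : {set T}) :
  S != S' -> ~~ ccg_adj S S' -> p \in S -> q \in S' -> p != q.
Proof.
rewrite /ccg_adj => -> /negbNE/eqP disjSS' pS qS'.
apply: contra_eqN disjSS' => /eqP pq; apply/set0Pn; exists p.
by rewrite inE pS pq.
Qed.

Lemma claw_free_ccg_adj_card_le2 (T : finType) :
  claw_free (fun S : {set {set T}} => #|S| <= 2) (@ccg_adj T).
Proof.
move=> [X [A [B [C [/and4P[X_le2 _ _ _] /and3P[AB AC BC]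
  /and3P[XA XB XC] /and3P[nAB nAC nBC]]]]]].
have [pA] := set0Pn _ (andP XA).2; rewrite inE => /andP[pAX pAA].
have [pB] := set0Pn _ (andP XB).2; rewrite inE => /andP[pBX pBB].
have [pC] := set0Pn _ (andP XC).2; rewrite inE => /andP[pCX pCC].
suff : 2 < #|X| by rewrite ltnNge; move: X_le2; rewrite unfold_in => ->.
apply/card_gt2P; exists pA, pB, pC; split; split => //.
- exact: ccg_nonadj_neq AB nAB pAA pBB.
- exact: ccg_nonadj_neq BC nBC pBB pCC.
- by rewrite eq_sym; exact: ccg_nonadj_neq AC nAC pAA pCC.
Qed.

Theorem mainTheorem10 (T : finType) (e : rel T) (P : {set {set T}}) :
  simple_graph e ->
  minmax_clique_covering e P ->
  simple_intersection P ->
  claw_free (fun _ : T => true) e /\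
  claw_free (ccg_vertex P) (@ccg_adj T).
Proof.
move=> _ [Pcover _ _] Psimple; split.
- exact: claw_free_clique_covering Pcover Psimple.
- apply: claw_free_subpred (@claw_free_ccg_adj_card_le2 _) => S.
  by case/and3P=> _ /andP[].
Qed.
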